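(* Let $(S,M,T)$ be a triangulated unpunctured surface and let $\chi_1,\chi_2$ be two admissible cuts of $(S,M,T)$, with weights $w_1,w_2$ on $Q_T$. Suppose $\tilde\Lambda_1$ and $\tilde\Lambda_2$ are graded equivalent via the identity, with function $r\colon (Q_T)_0\to\mathbb{Z}$ satisfying $w_2(\alpha)=w_1(\alpha)+r(s(\alpha))-r(t(\alpha))$ for all arrows $\alpha$. Let $Q^*$ be the covering quiver of $\tilde\Lambda_1$ and, for $\ell\in\mathbb{Z}$, let the $\ell$-th level partition be the full subquiver of $Q^*$ on the vertices $(v,\ell)$ with $r(v)=\ell$. Then each connected component $\mathcal{C}$ of a level partition determines a connected region of $S$ (the union of the arcs corresponding to the vertices of $\mathcal{C}$ and the triangles of $T$ corresponding to the arrows of $\mathcal{C}$) which is bounded by sliding edges of $(\chi_1,\chi_2)$ and by $\partial S$.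
   Context: $S$ is a connected oriented Riemann surface with boundary and no punctures, $M\subset\partial S$ a finite set of marked points with at least one on each boundary component (if $S$ is a disc, $|M|\ge 5$). Arcs are non-self-crossing curves (up to isotopy) with endpoints in $M$, interior disjoint from $M$ and $\partial S$, not cutting out a monogon or digon; a triangulation $T$ is a maximal set of pairwise non-crossing arcs, cutting $S$ into triangles whose sides are arcs or boundary segments; a triangle is internal if no side is a boundary segment. The quiver $Q_T$ has a vertex $i$ for each arc $\tau_i\in T$ and, for each triangle and each ordered pair of its arc-sides $\tau_i,\tau_j$ with $\tau_j$ following $\tau_i$ counterclockwise, an arrow $i\to j$; internal triangles give oriented 3-cycles. $\Lambda_T=kQ_T/I_T$ ($k$ algebraically closed), $I_T$ generated by the length-two subpaths of the 3-cycles of internal triangles. An admissible cut $\chi$ chooses in each internal triangle one of its vertices $v$; the two sides $\tau_i,\tau_j$ at $v$ determine the arrow $i\to j$ of the 3-cycle (the local cut $\chi_{i,j}$), and $\chi$ is identified with this set of arrows. The surface algebra is $kQ_T/\langle I_T\cup\chi\rangle$. The graded algebra $\tilde\Lambda$ is $\Lambda_T$ graded by the weight $w(\alpha)=1$ if $\alpha\in\chi$ and $w(\alpha)=0$ otherwise; $\tilde\Lambda_i$ is this for $\chi_i$. The covering quiver $Q^*$ of $\tilde\Lambda_1$ has vertices $(Q_T)_0\times\mathbb{Z}$ and, for each arrow $\alpha\colon v\to v'$ of $Q_T$ and each $i$, an arrow $(v,i)\to(v',i+w_1(\alpha))$ (the copies of $Q_T$ at fixed second coordinate are the levels). ''Graded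 equivalent via the identity'' means there is $r$ as in the claim (equivalently, the graded equivalence is induced by the identity map of $Q_T$). A sliding edge of $(\chi_1,\chi_2)$ is an arc of $T$ that is a side of an internal triangle in which $\chi_1$ and $\chi_2$ choose different vertices and that is incident to both chosen vertices.
   Formalization: An arc of the region that borders a triangle outside the region whose two other sides are boundary segments need not be a sliding edge, and S may have punctures. Apart from conventions, each condition added here is assumed in the paper as well or is needed for the statement above to hold. *)

From HB Require Import structures.
From mathcomp Require Import all_boot all_order all_algebra.
From Stdlib Require Import Relations.
Set Implicit Arguments. Unset Strict Implicit. Unset Printing Implicit Defensive.
Import GRing.Theory Num.Theory.
Local Open Scope ring_scope.

(* Raw data of a triangulation T: the arcs of T, the boundary segments,
   the triangles, and for each triangle its three sides listed in
   counterclockwise order: side t 0, side t 1, side t 2.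
   Corner k of t is the vertex of t common to side t k and side t (k+1). *)
Record tsurf := TSurf {
  tarc : finType;
  bseg : finType;
  tri  : finType;
  side : tri -> 'I_3 -> tarc + bseg
}.

Definition nxt (k : 'I_3) : 'I_3 := ordS k.

Definition isArc (A B : Type) (e : A + B) : bool :=
  if e is inl _ then true else false.

Section Surf.
Variable X : tsurf.

Definition slot := (tri X * 'I_3)%type.

Definition tri_adj : rel (tri X) := fun t t' =>
  [exists k : 'I_3, exists k' : 'I_3,
     (side t k == side t' k') && isArc (side t k)].

(* identification of corners: gluing the slots (t,j) and (t',j') along
   their common arc (orientation reversing) identifies the end corner j
   of side j of t with the start corner (j'-1) of side j' of t' *)
Definition corner_rel : rel slot := fun c c' =>
  [&& (c.1, c.2) != (c'.1, nxt c'.2),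
      side c.1 c.2 == side c'.1 (nxt c'.2) & isArc (side c.1 c.2)].

Definition corner_srel : rel slot := fun c c' => corner_rel c c' || corner_rel c' c.

(* marked points = classes of corners *)
Definition nb_marked : nat :=
  #|[set [set c' | connect corner_srel c c'] | c : slot]|.

Definition corner_on_bd (c : slot) : bool :=
  ~~ isArc (side c.1 c.2) || ~~ isArc (side c.1 (nxt c.2)).

(* (S,M,T) is a triangulated, connected, oriented, unpunctured marked
   surface (all gluings are orientation reversing by construction) *)
Definition valid_tsurf : Prop :=
  [/\ (forall a : tarc X, #|[set s : slot | side s.1 s.2 == inl a]| = 2%N),
      (forall b : bseg X, #|[set s : slot | side s.1 s.2 == inr b]| = 1%N),
      (0 < #|tri X|)%N,
      (forall t t' : tri X, connect tri_adj t t') &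
      (* unpunctured: every marked point lies on the boundary *)
      (forall c : slot, exists2 c', connect corner_srel c c' & corner_on_bd c') /\
      (* if S is a disc (Euler characteristic 1), then |M| >= 5 *)
      (nb_marked + #|tri X| = #|tarc X| + #|bseg X| + 1)%N -> (5 <= nb_marked)%N].

Definition internal (t : tri X) : bool := [forall k : 'I_3, isArc (side t k)].

(* A cut: for each triangle a corner; only its values on internal
   triangles matter.  Choosing corner k of t cuts the arrow side k -> side (k+1). *)
Definition cut := tri X -> 'I_3.

(* weight of the arrow of Q_T in triangle t from side k to side (k+1) *)
Definition weight (chi : cut) (t : tri X) (k : 'I_3) : int :=
  if internal t && (chi t == k) then 1 else 0.

Definition qarrow (t : tri X) (k : 'I_3) (a b : tarc X) : Prop :=
  side t k = inl a /\ side t (nxt k) = inl b.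

Definition graded_equiv_id (chi1 chi2 : cut) (r : tarc X -> int) : Prop :=
  forall t k a b, qarrow t k a b ->
    weight chi2 t k = weight chi1 t k + r a - r b.

Definition cov_arrow (chi1 : cut) (t : tri X) (k : 'I_3) (i : int)
    (x y : tarc X * int) : Prop :=
  qarrow t k x.1 y.1 /\ x.2 = i /\ y.2 = i + weight chi1 t k.

Definition in_level (r : tarc X -> int) (l : int) (x : tarc X * int) : Prop :=
  x.2 = l /\ r x.1 = l.

Definition level_arrow chi1 r l t k i (x y : tarc X * int) : Prop :=
  cov_arrow chi1 t k i x y /\ in_level r l x /\ in_level r l y.

Definition level_adj chi1 r l (x y : tarc X * int) : Prop :=
  exists t k i, level_arrow chi1 r l t k i x y \/ level_arrow chi1 r l t k i y x.

Definition level_component chi1 r l (C : tarc X * int -> Prop) : Prop :=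
  [/\ (forall x, C x -> in_level r l x),
      (exists x, C x),
      (forall x y, C x -> level_adj chi1 r l x y -> C y) &
      (forall x y, C x -> C y -> clos_refl_sym_trans _ (level_adj chi1 r l) x y)].

Definition reg_arc (C : tarc X * int -> Prop) (a : tarc X) : Prop :=
  exists i, C (a, i).

Definition reg_tri chi1 r l (C : tarc X * int -> Prop) (t : tri X) : Prop :=
  exists k i x y, level_arrow chi1 r l t k i x y /\ C x.

Definition on_side (a : tarc X) (t : tri X) : Prop := exists k, side t k = inl a.

Definition reg_elt chi1 r l C (z : tarc X + tri X) : Prop :=
  match z with inl a => reg_arc C a | inr t => reg_tri chi1 r l C t end.

Definition incident (z z' : tarc X + tri X) : Prop :=
  match z, z' with
  | inl a, inr t => on_side a t
  | inr t, inl a => on_side a t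
  | _, _ => False
  end.

Definition region_connected chi1 r l C : Prop :=
  forall z z', reg_elt chi1 r l C z -> reg_elt chi1 r l C z' ->
    clos_refl_sym_trans _ (fun u v => [/\ reg_elt chi1 r l C u,
                                         reg_elt chi1 r l C v & incident u v]) z z'.

Definition sliding (chi1 chi2 : cut) (e : tarc X) : Prop :=
  exists t, [/\ internal t, chi1 t <> chi2 t &
    exists k, [/\ side t k = inl e,
                  k = chi1 t \/ k = nxt (chi1 t) &
                  k = chi2 t \/ k = nxt (chi2 t)]].

Definition ear (t : tri X) (e : tarc X) : Prop :=
  forall k, isArc (side t k) -> side t k = inl e.

(* The region is bounded by sliding edges and by dS: every arc of the
   region across which the region is left (into a triangle not in the
   region) is a sliding edge, or only separates the region from dS
   (the triangle beyond it has its two other sides on dS).  Boundary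
   segments are part of dS. *)
Definition region_bounded chi1 chi2 r l C : Prop :=
  forall (e : tarc X) (t' : tri X),
    (reg_arc C e \/ exists2 t, reg_tri chi1 r l C t & on_side e t) ->
    on_side e t' -> ~ reg_tri chi1 r l C t' ->
    sliding chi1 chi2 e \/ ear t' e.

End Surf.

From mathcomp Require Import all_boot all_order all_algebra zify.
From Stdlib Require Import Relations.
Set Implicit Arguments. Unset Strict Implicit. Unset Printing Implicit Defensive.
Import GRing.Theory.
Local Open Scope ring_scope.

(* Weights are 0 or 1, so the grading condition w2 = w1 + r(s) - r(t) says
   that an arrow of Q_T stays inside one level of Q^* exactly when it is cut
   by neither chi1 nor chi2.  In a triangle, an arc side is joined to another
   side by such a doubly uncut arrow unless it is the only arc of a boundary
   triangle, or the triangle is internal, chi1 and chi2 choose different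
   corners and the side is opposite the unique doubly uncut arrow; that side
   is incident to both chosen corners, i.e. it is a sliding edge.  Hence a
   level component is left only across sliding edges or towards the
   boundary.  Its region is connected because consecutive vertices of a path
   in the component are joined through the triangle carrying their arrow. *)

Lemma nxt3 (k : 'I_3) : nxt (nxt (nxt k)) = k.
Proof. by apply: val_inj; case: k => -[|[|[|]]]. Qed.

Lemma nxt_neq (k : 'I_3) : nxt k != k.
Proof. by case: k => -[|[|[|//]]]. Qed.

Lemma ord3_nxt_cases (j k : 'I_3) : [|| k == j, k == nxt j | k == nxt (nxt j)].
Proof. by case: j k => -[|[|[|//]]] ? [[|[|[|//]]] ?]. Qed.

Lemma third_side (k m p : 'I_3) :
  m != k -> m != nxt k -> p != m -> (p == k) || (p == nxt k).
Proof. by case: k m p => -[|[|[|//]]] ? [[|[|[|//]]] ?] [[|[|[|//]]] ?]. Qed.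

Lemma cuts_at_both_ends (c1 c2 j : 'I_3) :
  (c1 == j) || (c2 == j) -> (c1 == nxt (nxt j)) || (c2 == nxt (nxt j)) ->
  [&& c1 != c2, (c1 == j) || (nxt c1 == j) & (c2 == j) || (nxt c2 == j)].
Proof. by case: c1 c2 j => -[|[|[|//]]] ? [[|[|[|//]]] ?] [[|[|[|//]]] ?]. Qed.

Section Cuts.
Variables (X : tsurf) (chi1 chi2 : cut X).

Definition uncut (t : tri X) (k : 'I_3) : Prop :=
  weight chi1 t k = 0 /\ weight chi2 t k = 0.

Lemma uncutP t k :
  reflect (uncut t k) (~~ internal t || (chi1 t != k) && (chi2 t != k)).
Proof.
rewrite /uncut /weight; case: (internal t) => /=; last by constructor.
by do 2 case: eqP => _; constructor => //= -[].
Qed.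

Lemma side_trichotomy t j e : side t j = inl e ->
  [\/ exists k a b, [/\ qarrow t k a b, uncut t k & k = j \/ nxt k = j],
      ear t e | sliding chi1 chi2 e].
Proof.
move=> sj; case: (boolP (internal t)) => [int_t|bd_t].
  have arc k : exists a, side t k = inl a.
    by move/forallP: int_t => /(_ k); case: (side t k) => // a; exists a.
  have [f sf] := arc (nxt j); have [g sg] := arc (nxt (nxt j)).
  have [uj|cut_j] := boolP ((chi1 t != j) && (chi2 t != j)).
    apply: Or31; exists j, e, f; split; [by [] | | by left].
    by apply/uncutP; rewrite int_t.
  have [up|cut_p] := boolP ((chi1 t != nxt (nxt j)) && (chi2 t != nxt (nxt j))).
    apply: Or31; exists (nxt (nxt j)), g, e.
    split; [by split; rewrite ?nxt3 | | by right; rewrite nxt3].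
    by apply/uncutP; rewrite int_t.
  rewrite !negb_and !negbK in cut_j cut_p.
  case/and3P: (cuts_at_both_ends cut_j cut_p) => /eqP c12 c1 c2.
  apply: Or33; exists t; split => //; exists j.
  by split => //; [case/orP: c1 | case/orP: c2] => /eqP; auto.
have all_uncut k : uncut t k by apply/uncutP; rewrite bd_t.
case sf: (side t (nxt j)) => [f|b].
  by apply: Or31; exists j, e, f; split; [| | left].
case sg: (side t (nxt (nxt j))) => [g|b'].
  apply: Or31; exists (nxt (nxt j)), g, e.
  by split; [split; rewrite ?nxt3 | | right; rewrite nxt3].
apply: Or32 => k; case/or3P: (ord3_nxt_cases j k) => /eqP ->; by rewrite ?sj ?sf ?sg.
Qed.

End Cuts.

Section LevelComponent.
Variables (X : tsurf) (chi1 chi2 : cut X) (r : tarc X -> int) (l : int).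
Variable C : tarc X * int -> Prop.
Hypothesis graded : graded_equiv_id chi1 chi2 r.
Hypothesis compC : level_component chi1 r l C.

Lemma uncut_r_eq t k a b : qarrow t k a b -> uncut chi1 chi2 t k -> r a = r b.
Proof.
move=> q [w1 w2]; move: (graded q); rewrite w1 w2 add0r => /eqP.
by rewrite eq_sym subr_eq0 => /eqP.
Qed.

Lemma level_arrow_uncut t k i x y :
  level_arrow chi1 r l t k i x y -> uncut chi1 chi2 t k.
Proof.
move=> [[q [xi yi]] [[xl rx] [yl ry]]].
have w1 : weight chi1 t k = 0 by lia.
by split=> //; move: (graded q); rewrite w1 rx ry add0r subrr.
Qed.

Lemma component_in_level x : C x -> in_level r l x.
Proof. by case: compC => inC _ _ _; apply: inC. Qed.

Lemma uncut_arrow_in_region t k a b :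
  qarrow t k a b -> uncut chi1 chi2 t k -> C (a, l) \/ C (b, l) ->
  [/\ C (a, l), C (b, l) & reg_tri chi1 r l C t].
Proof.
move=> q u Cab; have rab := uncut_r_eq q u.
have [ra rb] : r a = l /\ r b = l.
  by case: Cab => /component_in_level [_ /= rl]; rewrite -rl rab.
have lev : level_arrow chi1 r l t k l (a, l) (b, l).
  by split; [split; [|split] => //=; rewrite u.1 addr0 | split; split].
case: compC => _ _ closedC _.
have [Ca Cb] : C (a, l) /\ C (b, l).
  by case: Cab => C0; split=> //; apply: (closedC _ _ C0); exists t, k, l; auto.
by split=> //; exists k, l, (a, l), (b, l).
Qed.

Lemma region_tri_side t m e : reg_tri chi1 r l C t -> side t m = inl e ->
  C (e, l) \/ sliding chi1 chi2 e.
Proof.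
move=> [k [i [[a ia] [[b ib] [lev Cx]]]]] sm.
have u := level_arrow_uncut lev.
case: lev => [[q _] [[/= il _] _]]; rewrite il in Cx.
have [Ca Cb _] := uncut_arrow_in_region q u (or_introl Cx).
case: (q) => sa sb.
have C_side p c : (p == k) || (p == nxt k) -> side t p = inl c -> C (c, l).
  by case/orP=> /eqP ->; rewrite ?sa ?sb => -[<-].
have [mk|m_not_k] := boolP ((m == k) || (m == nxt k)); first by left; apply: C_side sm.
case: (side_trichotomy chi1 chi2 sm) => [[k' [a' [b' [q' u' mk']]]]|ear_e|]; last by right.
- left; case: (q') => sa' sb'.
  move: m_not_k; rewrite negb_or => /andP[mk1 mk2].
  case: mk' => Em.
  + have Cb' : C (b', l).
      by apply: C_side sb'; apply: third_side mk1 mk2 _; rewrite -Em nxt_neq.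
    have [Ca' _ _] := uncut_arrow_in_region q' u' (or_intror Cb').
    by move: sa'; rewrite Em sm => -[->].
  + have Ca' : C (a', l).
      by apply: C_side sa'; apply: third_side mk1 mk2 _; rewrite -Em eq_sym nxt_neq.
    have [_ Cb' _] := uncut_arrow_in_region q' u' (or_introl Ca').
    by move: sb'; rewrite Em sm => -[->].
- by left; move: (ear_e k); rewrite sa => /(_ isT) [<-].
Qed.

Lemma exit_from_component t j e : C (e, l) -> side t j = inl e ->
  ~ reg_tri chi1 r l C t -> sliding chi1 chi2 e \/ ear t e.
Proof.
move=> Ce sj not_reg.
case: (side_trichotomy chi1 chi2 sj) => [[k [a [b [[sa sb] u Ek]]]]||]; [|by right|by left].
have ab_e : C (a, l) \/ C (b, l).
  by case: Ek => Ek; [left; move: sa | right; move: sb]; rewrite Ek sj => -[<-].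
by case: not_reg; case: (uncut_arrow_in_region (conj sa sb) u ab_e).
Qed.

Lemma region_bounded_component : region_bounded chi1 chi2 r l C.
Proof.
move=> e t' He [j sj] not_reg.
have [Ce|] : C (e, l) \/ sliding chi1 chi2 e; last by left.
  case: He => [[i Ci]|[t reg_t [m sm]]]; last exact: region_tri_side reg_t sm.
  by left; case: (component_in_level Ci) => /= <-.
exact: exit_from_component Ce sj not_reg.
Qed.

Definition region_link (u v : tarc X + tri X) : Prop :=
  [/\ reg_elt chi1 r l C u, reg_elt chi1 r l C v & incident u v].

Lemma component_arc_in_region x : C x -> reg_elt chi1 r l C (inl x.1).
Proof. by case: x => a i Cx; exists i. Qed.

Lemma level_adj_linked x y : C x -> level_adj chi1 r l x y ->
  C y /\ clos_refl_sym_trans _ region_link (inl x.1) (inl y.1).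
Proof.
move=> Cx xy; case: compC => _ _ closedC _; have Cy := closedC _ _ Cx xy.
split=> //; case: xy => t [k [i lev]].
have [reg_t on_x on_y] : [/\ reg_tri chi1 r l C t, on_side x.1 t & on_side y.1 t].
  case: lev => lev; case: (lev) => -[[sx sy] _] _.
  - by split; [exists k, i, x, y | exists k | exists (nxt k)].
  - by split; [exists k, i, y, x | exists (nxt k) | exists k].
apply: (rst_trans _ _ _ (inr t)); apply: rst_step; split=> //.
- exact: component_arc_in_region.
- exact: component_arc_in_region.
Qed.

Lemma level_path_linked x y : clos_refl_sym_trans _ (level_adj chi1 r l) x y ->
  C x -> clos_refl_sym_trans _ region_link (inl x.1) (inl y.1).
Proof.
move=> xy; elim: (clos_rst_rst1n _ _ _ _ xy) => [z _|x0 y0 z0 step _ IH Cx].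
  exact: rst_refl.
have adj : level_adj chi1 r l x0 y0.
  by case: step => // -[t [k [i lev]]]; exists t, k, i; case: lev; auto.
have [Cy link] := level_adj_linked Cx adj.
exact: rst_trans _ _ _ _ _ link (IH Cy).
Qed.

Lemma region_elt_linked z : reg_elt chi1 r l C z ->
  exists2 x, C x & clos_refl_sym_trans _ region_link z (inl x.1).
Proof.
case: z => [a [i Ci]|t reg_t]; first by exists (a, i); last exact: rst_refl.
have [k [i [x [y [[[[sx _] _] _] Cx]]]]] := reg_t.
exists x => //; apply: rst_step; split=> //; last by exists k.
exact: component_arc_in_region.
Qed.

Lemma region_connected_component : region_connected chi1 r l C.
Proof.
move=> z z' reg_z reg_z'.
have [x Cx link_x] := region_elt_linked reg_z.
have [x' Cx' link_x'] := region_elt_linked reg_z'.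
case: compC => _ _ _ connC.
apply: rst_trans _ _ _ _ _ link_x _.
apply: rst_trans _ _ _ _ _ (level_path_linked (connC _ _ Cx Cx') Cx) _.
exact: rst_sym.
Qed.

End LevelComponent.

Theorem proposition3p9 (X : tsurf) (chi1 chi2 : cut X) (r : tarc X -> int) :
  valid_tsurf X ->
  graded_equiv_id chi1 chi2 r ->
  forall (l : int) (C : tarc X * int -> Prop),
    level_component chi1 r l C ->
    region_connected chi1 r l C /\ region_bounded chi1 chi2 r l C.
Proof.
move=> _ graded l C compC.
split; [exact: region_connected_component | exact: region_bounded_component graded compC].
Qed.
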